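(* In the FIND setting of the context, fix a leaf cluster $\mathcal C_r$ and a consistent ordering of $\mathcal T_r^+$. If $\mathcal C_i$ is a child of $\mathcal C_k$ in $\mathcal T_r^+$, then $\boldsymbol\Sigma_k(\mathcal B_i,\mathcal B_i)=\boldsymbol\Sigma_{i+}(\mathcal B_i,\mathcal B_i)$.
   Context: Setting (FIND). $\mathcal M$ is a finite set of mesh nodes; $\mathbf A$ is an invertible complex matrix indexed by $\mathcal M\times\mathcal M$, structurally symmetric ($A_{ij}\neq0\iff A_{ji}\neq0$); distinct nodes $i,j$ are connected if $A_{ij}\neq 0$. $\boldsymbol\Sigma$ is a complex matrix indexed by $\mathcal M\times\mathcal M$ with $\Sigma_{ij}=0$ whenever $i\neq j$ and $i,j$ are not connected. $\dagger$ is conjugate transpose, $\mathbf X^{-\dagger}=(\mathbf X^{-1})^\dagger$. $\mathbf X(X,Y)$ is the submatrix with rows in $X$, columns in $Y$. For a cluster $\mathcal C\subseteq\mathcal M$: boundary set $\mathcal B_{\mathcal C}=\{i\in\mathcal C: A_{ij}\neq 0\text{ for some } j\notin\mathcal C\}$, inner set $\mathcal I_{\mathcal C}=\mathcal C\setminus\mathcal B_{\mathcal C}$; for $\mathcal C_g$ write $\mathcal B_g,\mathcal I_g$. Cluster tree: $\mathcal T$ is a rooted binary tree of clusters with root $\mathcal M$, each non-leaf cluster the disjoint union of its two children. For a leaf $\mathcal C_r$ with path $r=a_0,\dots,a_d$ (root) and $b_k$ the sibling of $a_k$, the augmented tree $\mathcal T_r^+$ has root $\mathcal C_{-r}=\mathcal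 M\setminus\mathcal C_r$; for $0\le k\le d-2$, $\mathcal C_{-a_k}=\mathcal M\setminus\mathcal C_{a_k}$ has children $\mathcal C_{b_k}$ and $\mathcal C_{-a_{k+1}}$, with $\mathcal C_{-a_{d-1}}$ identified with $\mathcal C_{b_{d-1}}$; each basic cluster $\mathcal C_{b_k}$ carries its subtree from $\mathcal T$. Private inner nodes: $\mathcal S_g=\mathcal I_g$ for a leaf $g$ of $\mathcal T_r^+$; $\mathcal S_g=\mathcal I_g\setminus(\mathcal I_i\cup\mathcal I_j)$ if $g$ has children $i,j$. Consistent ordering: a total order $g_1,\dots,g_m$ of the nodes of $\mathcal T_r^+$ with every node after all its descendants. Elimination: $\mathbf A_{g_1}=\mathbf A$, $\boldsymbol\Sigma_{g_1}=\boldsymbol\Sigma$; for each $g$ (with $\mathbf A_g(\mathcal S_g,\mathcal S_g)$ invertible), $\mathcal L_g=\mathbf A_g(\mathcal B_g,\mathcal S_g)\mathbf A_g(\mathcal S_g,\mathcal S_g)^{-1}$, $\mathbf L_g$ is the identity on $\mathcal M$ except $\mathbf L_g(\mathcal B_g,\mathcal S_g)=\mathcal L_g$, $\mathbf A_{g+}=\mathbf L_g^{-1}\mathbf A_g$, $\boldsymbol\Sigma_{g+}=\mathbf L_g^{-1}\boldsymbol\Sigma_g\mathbf L_g^{-\dagger}$, and $\mathbf A_{g_{t+1}}=\mathbf A_{g_t+}$, $\boldsymbol\Sigma_{g_{t+1}}=\boldsymbol\Sigma_{g_t+}$. Thus $\boldsymbol\Sigma_k$ is the matrix just before, and $\boldsymbol\Sigma_{k+}$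 just after, eliminating $\mathcal S_k$. *)

From HB Require Import structures.
From mathcomp Require Import all_boot all_order all_algebra.
From mathcomp Require Import reals complex.
Set Implicit Arguments. Unset Strict Implicit. Unset Printing Implicit Defensive.
Import Order.TTheory GRing.Theory Num.Theory.
Local Open Scope ring_scope.

(* Mesh nodes are 'I_n; complex matrices indexed by M x M are 'M[R[i]]_n. *)

Section Matrices.
Variables (R : realType) (n : nat).
Local Notation C := (R[i]).
Local Notation mat := ('M[C]_n).

Definition ctrmx (X : mat) : mat := \matrix_(i, j) conjc (X j i).

Definition connected (A : mat) (i j : 'I_n) : bool := (i != j) && (A i j != 0).

Definition struct_symmetric (A : mat) : Prop :=
  forall i j, (A i j != 0) = (A j i != 0).

Definition sigma_sparsity (A Sigma : mat) : Prop :=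
  forall i j, i != j -> ~~ connected A i j -> Sigma i j = 0.

Definition bnd (A : mat) (Cl : {set 'I_n}) : {set 'I_n} :=
  [set i in Cl | [exists j, (j \notin Cl) && (A i j != 0)]].
Definition inner (A : mat) (Cl : {set 'I_n}) : {set 'I_n} := Cl :\: bnd A Cl.

Definition subSS (X : mat) (S : {set 'I_n}) : 'M[C]_#|S| :=
  \matrix_(a, b) X (enum_val a) (enum_val b).

(* L_g : identity except L_g(B,S) = X(B,S) X(S,S)^{-1} *)
Definition Lmat (X : mat) (B S : {set 'I_n}) : mat :=
  \matrix_(i, j)
    if (i \in B) && (j \in S) then
      \sum_(a < #|S|) \sum_(b < #|S| | enum_val b == j)
          X i (enum_val a) * (invmx (subSS X S)) a b
    else (i == j)%:R.
End Matrices.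

(* Binary cluster trees.  A node is addressed by its position: the list of
   directions (false = left child, true = right child) from the root.   *)

Inductive ctree (T : finType) :=
  | CLeaf of {set T}
  | CNode of {set T} & ctree T & ctree T.
Arguments CLeaf {T}.
Arguments CNode {T}.

Section Trees.
Variable T : finType.

Definition cl (t : ctree T) : {set T} :=
  match t with CLeaf C => C | CNode C _ _ => C end.

Fixpoint wf_ctree (t : ctree T) : Prop :=
  match t with
  | CLeaf _ => True
  | CNode C l r => C = cl l :|: cl r /\ [disjoint cl l & cl r] /\
                   wf_ctree l /\ wf_ctree r
  end.

Definition cluster_tree (t : ctree T) : Prop := wf_ctree t /\ cl t = setT.

Fixpoint subtree_at (t : ctree T) (q : seq bool) : option (ctree T) :=
  match q with
  | [::] => Some t
  | b :: q' => match t with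
               | CLeaf _ => None
               | CNode _ l r => subtree_at (if b then r else l) q'
               end
  end.

Definition is_node (t : ctree T) (q : seq bool) : bool :=
  if subtree_at t q is Some _ then true else false.

Definition is_leaf (t : ctree T) (q : seq bool) : bool :=
  if subtree_at t q is Some (CLeaf _) then true else false.

Definition cl_at (t : ctree T) (q : seq bool) : {set T} :=
  if subtree_at t q is Some u then cl u else set0.

Definition is_child (t : ctree T) (i k : seq bool) : Prop :=
  is_node t k /\ is_node t i /\ exists b, i = rcons k b.

(* Augmented tree T_r^+ for the leaf at position p.  [aug_rec acc u q]:
   acc is the tree of C_{-a} where a is the node u (reached so far);
   descending from u to its child a' on the path, with sibling s, the
   tree of C_{-a'} = M \ C_{a'} has children C_s (with its subtree) and
   C_{-a}.  At the root's child a_{d-1}, C_{-a_{d-1}} is identified with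
   the sibling C_{b_{d-1}} (with its subtree). *)
Fixpoint aug_rec (acc : ctree T) (u : ctree T) (q : seq bool) : ctree T :=
  match q, u with
  | b :: q', CNode _ l r =>
      let a := if b then r else l in
      let s := if b then l else r in
      aug_rec (CNode (~: cl a) s acc) a q'
  | _, _ => acc
  end.

Definition aug (t : ctree T) (p : seq bool) : ctree T :=
  match p, t with
  | b :: p', CNode _ l r =>
      let a := if b then r else l in
      let s := if b then l else r in
      aug_rec s a p'
  | _, _ => CLeaf (~: cl t)  (* degenerate case d = 0: C_{-r} = M \ M *)
  end.

Definition consistent_ordering (t : ctree T) (s : seq (seq bool)) : Prop :=
  [/\ uniq s,
      forall q, (q \in s) = is_node t q &
      forall q q', q' != [::] -> is_node t (q ++ q') ->
        index (q ++ q') s < index q s]%N.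
End Trees.

Section Elimination.
Variables (R : realType) (n : nat).
Local Notation C := (R[i]).
Local Notation mat := ('M[C]_n).
Variable A : mat.   (* the original matrix: defines boundary/inner sets *)

Definition priv (t : ctree 'I_n) (g : seq bool) : {set 'I_n} :=
  match subtree_at t g with
  | Some (CLeaf Cg) => inner A Cg
  | Some (CNode Cg l r) => inner A Cg :\: (inner A (cl l) :|: inner A (cl r))
  | None => set0
  end.

Definition elim_step (t : ctree 'I_n) (st : mat * mat) (g : seq bool) : mat * mat :=
  let X := st.1 in let Sg := st.2 in
  let L := Lmat X (bnd A (cl_at t g)) (priv t g) in
  (invmx L *m X, invmx L *m Sg *m ctrmx (invmx L)).

Definition elim_state (Sigma : mat) (t : ctree 'I_n) (s : seq (seq bool)) (m : nat)
  : mat * mat := foldl (elim_step t) (A, Sigma) (take m s).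

Definition A_before Sigma t s g := (elim_state Sigma t s (index g s)).1.
Definition Sigma_before Sigma t s g := (elim_state Sigma t s (index g s)).2.
Definition Sigma_after Sigma t s g := (elim_state Sigma t s (index g s).+1).2.

Definition elim_invertible (Sigma : mat) (t : ctree 'I_n) (s : seq (seq bool)) : Prop :=
  forall g, g \in s -> subSS (A_before Sigma t s g) (priv t g) \in unitmx.
End Elimination.

From HB Require Import structures.
From mathcomp Require Import all_boot all_order all_algebra.
From mathcomp Require Import reals complex.
Set Implicit Arguments. Unset Strict Implicit. Unset Printing Implicit Defensive.
Import GRing.Theory.
Local Open Scope ring_scope.

(* Eliminating S_g replaces Sigma by L_g^-1 Sigma L_g^-dagger, and both factors
   act as the identity on rows (resp. columns) outside B_g; so the entries of
   Sigma on pairs of nodes outside B_g are untouched.  In a consistent ordering,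
   the nodes eliminated strictly after the child i and strictly before its
   parent k are neither descendants nor ancestors of i, hence their clusters,
   and a fortiori their boundary sets, are disjoint from C_i.  Thus the block
   Sigma(B_i, B_i) does not change between Sigma_{i+} and Sigma_k. *)

Section ClusterTrees.
Variable T : finType.

Lemma cl_at_sub (t : ctree T) q : wf_ctree t -> cl_at t q \subset cl t.
Proof.
elim: t q => [C|C l IHl r IHr] [|b q] //=; first by rewrite /cl_at sub0set.
move=> [-> [_ [wl wr]]]; case: b.
- exact: subset_trans (IHr q wr) (subsetUr _ _).
- exact: subset_trans (IHl q wl) (subsetUl _ _).
Qed.

Lemma disjoint_cl_at (t : ctree T) g h : wf_ctree t ->
  ~~ prefix g h -> ~~ prefix h g -> [disjoint cl_at t g & cl_at t h].
Proof.
elim: t g h => [C|C l IHl r IHr] [|b g] [|c h] //=.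
  by rewrite /cl_at /= -setI_eq0 setI0.
move=> [_ [dlr [wl wr]]] /=.
change (cl_at _ (b :: g)) with (cl_at (if b then r else l) g).
change (cl_at _ (c :: h)) with (cl_at (if c then r else l) h).
case: b c => [] [] //= gh hg; [exact: IHr | | | exact: IHl].
- apply: disjointWl (cl_at_sub g wr) _; rewrite disjoint_sym.
  exact: disjointWl (cl_at_sub h wl) dlr.
- apply: disjointWl (cl_at_sub g wl) _; rewrite disjoint_sym.
  by apply: disjointWl (cl_at_sub h wr) _; rewrite disjoint_sym.
Qed.

Lemma setC_disjointU (X Y : {set T}) : [disjoint X & Y] -> ~: X = Y :|: ~: (X :|: Y).
Proof.
move=> dXY; apply/setP => x; rewrite !inE.
by case hX: (x \in X); case hY: (x \in Y) => //=; rewrite (disjointFr dXY hX) in hY.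
Qed.

Lemma wf_aug_rec (acc u : ctree T) q : wf_ctree acc -> wf_ctree u ->
  cl acc = ~: cl u -> wf_ctree (aug_rec acc u q).
Proof.
elim: q acc u => [|b q IH] acc [C|C l r] //= wa [eC [dlr [wl wr]]] ea.
apply: IH; [|by case: b..].
split; [|split; [|split=> //]]; last (by case: b); rewrite ea eC.
- case: b; last exact: setC_disjointU.
  by rewrite [cl l :|: cl r]setUC; apply: setC_disjointU; rewrite disjoint_sym.
- by rewrite disjoints_subset setCK; case: b; [exact: subsetUl | exact: subsetUr].
Qed.

Lemma wf_aug (t : ctree T) p : cluster_tree t -> wf_ctree (aug t p).
Proof.
case: p => [|b p]; case: t => [C|C l r] //= [[eC [dlr [wl wr]]] eCT].
apply: wf_aug_rec; try by case: b.
have eT : cl l :|: cl r = setT by rewrite -eC.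
case: b => /=; apply/esym; [rewrite disjoint_sym in dlr; rewrite setUC in eT|];
  by rewrite (setC_disjointU dlr) eT setCT setU0.
Qed.
End ClusterTrees.

Lemma prefix_rconsE (A : eqType) (g k : seq A) b :
  prefix g (rcons k b) = (g == rcons k b) || prefix g k.
Proof.
apply/idP/idP; last by case/orP => [/eqP-> | /prefix_catl]; rewrite ?prefix_refl // -cats1.
case/prefixP => q; case/lastP: q => [|q c]; first by rewrite cats0 => ->; rewrite eqxx.
by rewrite -rcons_cat => /rcons_inj[-> _]; rewrite prefix_prefix orbT.
Qed.

Lemma uniq_index_take_drop (A : eqType) (s : seq A) m j a : uniq s ->
  a \in take j (drop m s) -> (m <= index a s < m + j)%N.
Proof.
move=> us aseg; have amj : a \in take (m + j) s by rewrite takeD mem_cat aseg orbT.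
have := take_uniq (m + j) us; rewrite takeD cat_uniq => /and3P[_ /hasPn/(_ a aseg) am _].
by rewrite index_ltn // andbT leqNgt -in_take // (mem_take amj).
Qed.

Lemma foldl_invariant (S : Type) (A : eqType) (B : Type) (f : S -> A -> S) (obs : S -> B)
    (u : seq A) st :
  (forall a st', a \in u -> obs (f st' a) = obs st') -> obs (foldl f st u) = obs st.
Proof.
elim: u st => //= a u IH st keep.
by rewrite IH ?keep ?mem_head // => a' st' a'u; rewrite keep // in_cons a'u orbT.
Qed.

Section ConsistentOrderings.
Variables (T : finType) (t : ctree T) (s : seq (seq bool)).
Hypothesis co : consistent_ordering t s.

Lemma consistent_ordering_prefix g h : is_node t h -> prefix g h ->
  (index h s <= index g s)%N.
Proof.
have [_ _ ord] := co; move=> nh /prefixP[q eh]; rewrite eh in nh *.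
by have [->|q0] := eqVneq q [::]; [rewrite cats0 | exact/ltnW/ord].
Qed.

Lemma consistent_ordering_child k b : is_node t (rcons k b) ->
  (index (rcons k b) s < index k s)%N.
Proof. by have [_ _ ord] := co; rewrite -cats1; apply: ord. Qed.

Lemma consistent_ordering_incomparable k b g : is_node t k -> g \in s ->
  (index (rcons k b) s < index g s)%N -> (index g s < index k s)%N ->
  ~~ prefix g (rcons k b) /\ ~~ prefix (rcons k b) g.
Proof.
have [_ in_s _] := co; move=> nk gs ig gk; split.
- rewrite prefix_rconsE negb_or; apply/andP; split.
    by apply: contraTneq ig => ->; rewrite ltnn.
  by apply: contraTN gk => /(consistent_ordering_prefix nk); rewrite -leqNgt.
- apply: contraTN ig; rewrite in_s in gs.
  by move/(consistent_ordering_prefix gs); rewrite -leqNgt.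
Qed.
End ConsistentOrderings.

Section UnitRows.
Variables (R : comUnitRingType) (n : nat).
Implicit Types (P M Q : 'M[R]_n) (x y : 'I_n).

Lemma mulmx_unit_row P M x : (forall c, P x c = 1%:M x c) ->
  forall y, (P *m M) x y = M x y.
Proof. by move=> Px y; rewrite -{2}(mul1mx M) !mxE; apply: eq_bigr => c _; rewrite Px. Qed.

Lemma mulmx_unit_col M Q y : (forall c, Q c y = 1%:M c y) ->
  forall x, (M *m Q) x y = M x y.
Proof. by move=> Qy x; rewrite -{2}(mulmx1 M) !mxE; apply: eq_bigr => c _; rewrite Qy. Qed.

Lemma invmx_unit_row P x : (forall c, P x c = 1%:M x c) ->
  forall c, invmx P x c = 1%:M x c.
Proof.
move=> Px c; have [Pu | /invmx_out-> //] := boolP (P \in unitmx).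
by rewrite -(mulmx_unit_row (invmx P) Px) mulmxV.
Qed.
End UnitRows.

Section EliminationStep.
Variables (R : realType) (n : nat) (A : 'M[R[i]]_n).

Lemma ctrmx_unit_col (Q : 'M[R[i]]_n) y : (forall c, Q y c = 1%:M y c) ->
  forall c, ctrmx Q c y = 1%:M c y.
Proof. by move=> Qy c; rewrite !mxE Qy mxE rmorph_nat eq_sym. Qed.

Lemma Lmat_unit_row (X : 'M[R[i]]_n) (B S : {set 'I_n}) x : x \notin B ->
  forall c, Lmat X B S x c = 1%:M x c.
Proof. by move=> xB c; rewrite !mxE (negbTE xB). Qed.

Lemma disjoint_bnd (C D : {set 'I_n}) : [disjoint C & D] -> [disjoint bnd A C & bnd A D].
Proof.
have bnd_sub E : bnd A E \subset E by apply/subsetP => z; rewrite inE => /andP[].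
by move=> dCD; apply: disjointWl (bnd_sub C) (disjointWr (bnd_sub D) dCD).
Qed.

Lemma elim_step_Sigma_notin t st g x y :
  x \notin bnd A (cl_at t g) -> y \notin bnd A (cl_at t g) ->
  (elim_step A t st g).2 x y = st.2 x y.
Proof.
move=> xB yB.
have Lx := invmx_unit_row (Lmat_unit_row st.1 (priv A t g) xB).
have Ly := ctrmx_unit_col (invmx_unit_row (Lmat_unit_row st.1 (priv A t g) yB)).
by rewrite /= (mulmx_unit_col _ Ly) (mulmx_unit_row _ Lx).
Qed.
End EliminationStep.

Theorem corollary2 (R : realType) (n : nat) (A Sigma : 'M[R[i]]_n)
    (T : ctree 'I_n) (p : seq bool) (Cr : {set 'I_n})
    (s : seq (seq bool)) (i k : seq bool) :
  A \in unitmx ->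
  struct_symmetric A ->
  sigma_sparsity A Sigma ->
  cluster_tree T ->
  subtree_at T p = Some (CLeaf Cr) ->
  consistent_ordering (aug T p) s ->
  elim_invertible A Sigma (aug T p) s ->
  is_child (aug T p) i k ->
  forall x y, x \in bnd A (cl_at (aug T p) i) -> y \in bnd A (cl_at (aug T p) i) ->
    Sigma_before A Sigma (aug T p) s k x y = Sigma_after A Sigma (aug T p) s i x y.
Proof.
move=> _ _ _ cT _ co _ [nk [ni [b Ei]]] x y xB yB; subst i.
have wft := wf_aug p cT; set t := aug T p in co wft nk ni xB yB *.
have [us _ _] := co; have ik := consistent_ordering_child co ni.
rewrite /Sigma_before /Sigma_after /elim_state -(subnKC ik) takeD foldl_cat.
rewrite (@foldl_invariant _ _ _ (elim_step A t) (fun st => st.2 x y)) // => g st gseg.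
have /andP[ig gk] := uniq_index_take_drop us gseg; rewrite subnKC // in gk.
have gs : g \in s by move: gseg => /mem_take/mem_drop.
have [not_gi not_ig] := consistent_ordering_incomparable co nk gs ig gk.
have dB := disjoint_bnd A (disjoint_cl_at wft not_gi not_ig).
by rewrite elim_step_Sigma_notin // (disjointFl dB).
Qed.
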